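(* Let $n\ge 2$, $\ell\ge 1$, and let $\mathcal{L}\in\mathcal{A}(n,n-2,\ell)$. For every $1\le j\le n$, the word $W_j=\mathbf{1}-\mathbf{e}_j$ can be covered only by a codeword of the form $\mathbf{1}-\lambda\mathbf{e}_j$ with $\lambda$ an integer, $1\le\lambda\le\ell+1$.
   Context: $\mathcal{S}(n,t,\ell)=\{\mathcal{E}\in\mathbb{Z}^n: 0\le\varepsilon_i\le\ell \text{ for all } i,\ w_H(\mathcal{E})\le t\}$, with $w_H$ the number of nonzero coordinates. A lattice here is the set of integer combinations of $n$ linearly independent vectors of $\mathbb{Z}^n$. $\mathcal{A}(n,t,\ell)$ is the set of lattices $\mathcal{L}\subseteq\mathbb{Z}^n$ such that the translates $X+\mathcal{S}(n,t,\ell)$, $X\in\mathcal{L}$, are pairwise disjoint; elements of $\mathcal{L}$ are codewords. A codeword $X$ covers $Y\in\mathbb{Z}^n$ if $Y=X+\mathcal{E}$ for some $\mathcal{E}\in\mathcal{S}(n,n-2,\ell)$. $\mathbf{1}$ is the all-one vector and $\mathbf{e}_j$ the $j$-th unit vector. *)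

From mathcomp Require Import all_boot all_order all_algebra.
Set Implicit Arguments. Unset Strict Implicit. Unset Printing Implicit Defensive.
Import Order.TTheory GRing.Theory Num.Theory.
Local Open Scope ring_scope.

Definition wH (n : nat) (E : 'rV[int]_n) : nat := #|[set i : 'I_n | E 0 i != 0]|.

Definition inS (n t l : nat) (E : 'rV[int]_n) : Prop :=
  (forall i : 'I_n, 0 <= E 0 i <= l%:Z) /\ (wH E <= t)%N.

Definition is_lattice (n : nat) (L : 'rV[int]_n -> Prop) : Prop :=
  exists B : 'M[int]_n,
    (forall c : 'rV[int]_n, c *m B = 0 -> c = 0) /\
    (forall X, L X <-> exists c : 'rV[int]_n, X = c *m B).

Definition in_A (n t l : nat) (L : 'rV[int]_n -> Prop) : Prop :=
  is_lattice L /\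
  forall X Y E1 E2 : 'rV[int]_n, L X -> L Y -> X <> Y ->
    inS t l E1 -> inS t l E2 -> X + E1 <> Y + E2.

Definition covers (n l : nat) (X Y : 'rV[int]_n) : Prop :=
  exists E, inS (n - 2) l E /\ Y = X + E.

Definition ones (n : nat) : 'rV[int]_n := const_mx 1.
Definition unitv (n : nat) (j : 'I_n) : 'rV[int]_n := delta_mx 0 j.

(* Write W = 1 - e_j = X + E with X a codeword and E in S(n, n-2, l).  If E had a
   nonzero entry at some k <> j, split X into its positive and negative parts,
   X + X^- = X^+.  Both parts lie in S(n, n-2, l): X^- is supported inside the
   support of E, and X^+ has entries in {0, 1} and vanishes at j and at k.  As
   0 is a codeword, disjointness of the translates forces X = 0, so E = W has
   weight n - 1 > n - 2, a contradiction.  Hence E = eps e_j, X = 1 - (1 + eps) e_j. *)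
From mathcomp Require Import all_boot all_order all_algebra.
From mathcomp Require Import zify.
Set Implicit Arguments. Unset Strict Implicit. Unset Printing Implicit Defensive.
Import Order.TTheory GRing.Theory Num.Theory.
Local Open Scope ring_scope.

Lemma lattice0 n (L : 'rV[int]_n -> Prop) : is_lattice L -> L 0.
Proof. by case=> B [_ LB]; apply/LB; exists 0; rewrite mul0mx. Qed.

Lemma in_A_eq0 (n t l : nat) (L : 'rV[int]_n -> Prop) X E1 E2 :
  in_A t l L -> L X -> inS t l E1 -> inS t l E2 -> X + E1 = E2 -> X = 0.
Proof.
move=> [latL disj] LX S1 S2 XE; have [//|/eqP X0] := eqVneq X 0.
by case: (disj X 0 E1 E2 LX (lattice0 latL) X0 S1 S2); rewrite add0r.
Qed.

Definition pos_part (R : realDomainType) m n (A : 'M[R]_(m, n)) :=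
  map_mx (fun x => Num.max x 0) A.

Lemma add_pos_partN (R : realDomainType) m n (A : 'M[R]_(m, n)) :
  A + pos_part (- A) = pos_part A.
Proof.
apply/matrixP => i k; rewrite !mxE; move: (A i k) => x.
have [x_ge0|x_lt0] := lerP 0 x.
  by rewrite max_r ?oppr_le0 // addr0.
by rewrite max_l ?oppr_ge0 ?ltW // subrr.
Qed.

Lemma wH_pos_part n (X : 'rV[int]_n) : wH (pos_part X) = #|[set i | 0 < X 0 i]|.
Proof.
apply: eq_card => i; rewrite !inE mxE maxEle.
by case: leP => [//|/gt_eqF->].
Qed.

Lemma inS_pos_part (n t l : nat) (X : 'rV[int]_n) :
  (forall i : 'I_n, X 0 i <= l%:Z) -> (#|[set i | (0 < X 0 i)%R]| <= t)%N ->
  inS t l (pos_part X).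
Proof.
move=> X_le wX; split; last by rewrite wH_pos_part.
by move=> i; rewrite mxE le_max lexx orbT /= ge_max X_le /=.
Qed.

Lemma ones_subr_unitvE n (j i : 'I_n) :
  (ones n - unitv j) 0 i = if i == j then 0 else 1.
Proof. by rewrite !mxE /=; case: (i == j); rewrite ?subrr ?subr0. Qed.

Section CoveringOnesMinusUnit.

Variables (n l : nat) (L : 'rV[int]_n -> Prop).
Hypotheses (n_ge2 : (2 <= n)%N) (l_ge1 : (1 <= l)%N) (LA : in_A (n - 2) l L).
Variables (j : 'I_n) (X E : 'rV[int]_n).
Hypotheses (LX : L X) (SE : inS (n - 2) l E) (WXE : ones n - unitv j = X + E).

Let XE i : X 0 i = (if i == j then 0 else 1) - E 0 i.
Proof. by rewrite -ones_subr_unitvE WXE mxE addrK. Qed.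

Let X_bounds i : - l%:Z <= X 0 i <= 1.
Proof. by rewrite XE; have := SE.1 i; case: (i == j); lia. Qed.

Lemma cover_error_eq0 k : k != j -> E 0 k = 0.
Proof.
move=> kj; apply/eqP/negP => /negP Ek; have [E_bd wE] := SE.
have neg_inS : inS (n - 2) l (pos_part (- X)).
  apply: inS_pos_part => [i|]; first by rewrite mxE lerNl; case/andP: (X_bounds i).
  apply: leq_trans wE; apply: subset_leq_card; apply/subsetP => i.
  rewrite !inE mxE oppr_gt0; apply: contraTneq => Ei.
  by rewrite XE Ei subr0; case: (i == j).
have pos_inS : inS (n - 2) l (pos_part X).
  apply: inS_pos_part => [i|]; first by have := X_bounds i; lia.
  have -> : (n - 2)%N = #|~: [set j; k]|.
    by have := cardsC [set j; k]; rewrite cards2 eq_sym kj card_ord; lia.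
  apply: subset_leq_card; apply/subsetP => i; rewrite !inE XE.
  apply: contraTN => /orP[] /eqP->; rewrite ?eqxx ?(negbTE kj);
    have := E_bd j; have := E_bd k; move: Ek; lia.
have X0 := in_A_eq0 LA LX neg_inS pos_inS (add_pos_partN X).
have EW : E = ones n - unitv j by rewrite WXE X0 add0r.
have : (n.-1 <= wH E)%N.
  rewrite -[n in n.-1]card_ord -(cardsC1 j); apply: subset_leq_card; apply/subsetP => i.
  by rewrite !inE EW ones_subr_unitvE => /negbTE->.
by move: wE; lia.
Qed.

End CoveringOnesMinusUnit.

Theorem mainTheorem16 (n l : nat) (L : 'rV[int]_n -> Prop) :
  (2 <= n)%N -> (1 <= l)%N -> in_A (n - 2) l L ->
  forall (j : 'I_n) (X : 'rV[int]_n),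
    L X -> covers l X (ones n - unitv j) ->
    exists lam : int, 1 <= lam <= l%:Z + 1 /\ X = ones n - lam *: unitv j.
Proof.
move=> n_ge2 l_ge1 LA j X LX [E [SE WXE]].
have E_offj := cover_error_eq0 n_ge2 l_ge1 LA LX SE WXE.
exists (1 + E 0 j); split; first by have := SE.1 j; lia.
have -> : X = ones n - unitv j - E by rewrite WXE addrK.
apply/rowP => i; rewrite !mxE /=; case: (eqVneq i j) => [->|ij].
  by rewrite mulr1 opprD addrA.
by rewrite E_offj // mulr0 !subr0.
Qed.
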